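(* For every injective function $f:M\to N$, the function $\mathcal{PP}_b(f):\mathcal{PP}_b(M)\to\mathcal{PP}_b(N)$ is injective.
   Context: For a set $M$ whose elements are treated as atoms (urelements, distinct from every set built below), let $T_1=\mathcal{P}(M)$, $T_{n+1}=T_n\cup\mathcal{P}(T_n)$, and $\mathcal{PP}_b(M)=\bigcup_{n\ge 1}T_n$ (so $\mathcal{P}(M)\subseteq\mathcal{PP}_b(M)$, every subset of $\mathcal{PP}_b(M)$ of finite nesting depth is an element, but elements of $M$ are not elements of $\mathcal{PP}_b(M)$). For $f:M\to N$, $\mathcal{PP}_b(f)$ is defined recursively on $X\in\mathcal{PP}_b(M)$ by $\mathcal{PP}_b(f)(X)=\{f(x)\mid x\in X\cap M\}\cup\{\mathcal{PP}_b(f)(x)\mid x\in X\setminus M\}$. *)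

(* Sets with urelements are modelled as Aczel trees:
   a tree is either an atom (an element of M) or a set given by an
   indexing family of trees; set equality is extensional (bisimulation). *)

Inductive Acz (A : Type) : Type :=
| Atom : A -> Acz A
| Sup : forall I : Type, (I -> Acz A) -> Acz A.

Arguments Atom {A} _.
Arguments Sup {A} _ _.

Fixpoint aeq {A : Type} (x y : Acz A) {struct x} : Prop :=
  match x, y with
  | Atom a, Atom b => a = b
  | @Sup _ Ix g, @Sup _ Jx h =>
      (forall i, exists j, aeq (g i) (h j)) /\
      (forall j, exists i, aeq (g i) (h j))
  | _, _ => False
  end.

Definition is_atom {A : Type} (x : Acz A) : Prop :=
  match x with Atom _ => True | @Sup _ _ _ => False end.

(* Tlev n x  <->  x belongs to T_{n+1}.
   T_1 = P(M) (sets all of whose elements are atoms),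
   T_{n+1} = T_n  \cup  P(T_n). *)
Fixpoint Tlev {A : Type} (n : nat) (x : Acz A) : Prop :=
  match n with
  | 0 => match x with
         | Atom _ => False
         | @Sup _ Ix g => forall i, is_atom (g i)
         end
  | S n' => Tlev n' x \/
            match x with
            | Atom _ => False
            | @Sup _ Ix g => forall i, Tlev n' (g i)
            end
  end.

Definition in_PPb {A : Type} (x : Acz A) : Prop := exists n, Tlev n x.

Fixpoint PPb {M N : Type} (f : M -> N) (x : Acz M) : Acz N :=
  match x with
  | Atom m => Atom (f m)
  | @Sup _ Ix g => Sup Ix (fun i => PPb f (g i))
  end.

From Stdlib Require Import FinFun.

Lemma PPb_reflects_aeq (M N : Type) (f : M -> N) :
  Injective f -> forall X Y : Acz M, aeq (PPb f X) (PPb f Y) -> aeq X Y.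
Proof.
  intros f_inj X; induction X as [a | I g IH]; intros [b | J h]; simpl;
    try contradiction.
  - apply f_inj.
  - intros [g_sub_h h_sub_g]; split.
    + intros i; destruct (g_sub_h i) as [j gh]; exists j; exact (IH i (h j) gh).
    + intros j; destruct (h_sub_g j) as [i gh]; exists i; exact (IH i (h j) gh).
Qed.

Theorem mainTheorem5 (M N : Type) (f : M -> N) :
  (forall a b : M, f a = f b -> a = b) ->
  forall X Y : Acz M, in_PPb X -> in_PPb Y ->
    aeq (PPb f X) (PPb f Y) -> aeq X Y.
Proof.
  intros f_inj X Y _ _.
  exact (PPb_reflects_aeq M N f f_inj X Y).
Qed.
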